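(* Suppose $X$ has well-defined scattered $\Pi_1$-products. Let $A$ be a homotopy cut-set for paths $\alpha,\beta:[0,1]\to X$ such that $\alpha|_{[a,b]}\simeq\beta|_{[a,b]}$ for all $a,b\in A\cap(0,1)$ with $a<b$. Then $\alpha\simeq\beta$.
   Context: $\simeq$ is path-homotopy. For paths $\alpha,\beta:[s,t]\to X$, a set $A\subseteq[s,t]$ is a homotopy cut-set for $\alpha,\beta$ if $A$ is closed, nowhere dense, contains $\{s,t\}$, $\alpha|_A=\beta|_A$, and $\alpha|_{[a,b]}\simeq\beta|_{[a,b]}$ for every component $(a,b)$ of $[s,t]\setminus A$. $X$ has well-defined scattered $\Pi_1$-products if any two paths $[0,1]\to X$ that admit a scattered homotopy cut-set (one in which every non-empty subset has an isolated point) are path-homotopic. *)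

From Stdlib Require Import Reals.
Open Scope R_scope.

Record TopSpace := {
  pt :> Type;
  is_open : (pt -> Prop) -> Prop;
  open_full : is_open (fun _ => True);
  open_empty : is_open (fun _ => False);
  open_inter : forall U V, is_open U -> is_open V -> is_open (fun x => U x /\ V x);
  open_union : forall (I : Type) (F : I -> pt -> Prop),
      (forall i, is_open (F i)) -> is_open (fun x => exists i, F i x)
}.

Definition cont_on {X : TopSpace} (s t : R) (f : R -> X) : Prop :=
  forall U, is_open X U ->
  forall x, s <= x <= t -> U (f x) ->
  exists d, 0 < d /\ forall y, s <= y <= t -> Rabs (y - x) < d -> U (f y).

(* A path [s,t] -> X (values outside [s,t] are irrelevant). *)
Definition is_path {X : TopSpace} (s t : R) (f : R -> X) : Prop := cont_on s t f.

Definition cont_on2 {X : TopSpace} (s t : R) (H : R -> R -> X) : Prop :=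
  forall U, is_open X U ->
  forall x u, s <= x <= t -> 0 <= u <= 1 -> U (H x u) ->
  exists d, 0 < d /\ forall y v, s <= y <= t -> 0 <= v <= 1 ->
     Rabs (y - x) < d -> Rabs (v - u) < d -> U (H y v).

Definition path_homotopic {X : TopSpace} (s t : R) (alpha beta : R -> X) : Prop :=
  exists H : R -> R -> X,
    cont_on2 s t H /\
    (forall x, s <= x <= t -> H x 0 = alpha x) /\
    (forall x, s <= x <= t -> H x 1 = beta x) /\
    (forall u, 0 <= u <= 1 -> H s u = alpha s /\ H t u = alpha t).

Definition closure_R (A : R -> Prop) (x : R) : Prop :=
  forall e, 0 < e -> exists a, A a /\ Rabs (a - x) < e.
Definition closed_R (A : R -> Prop) : Prop :=
  forall x, closure_R A x -> A x.

Definition nowhere_dense (A : R -> Prop) : Prop :=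
  forall c d, c < d -> exists x, c < x < d /\ ~ closure_R A x.

Definition scattered (A : R -> Prop) : Prop :=
  forall B : R -> Prop, (forall x, B x -> A x) -> (exists b, B b) ->
  exists b, B b /\ exists e, 0 < e /\ forall c, B c -> Rabs (c - b) < e -> c = b.

(* Homotopy cut-set for alpha, beta : [s,t] -> X.  The components of
   [s,t] \ A (A closed, containing s and t) are exactly the open intervals
   (a,b) with a < b, a, b in A and (a,b) disjoint from A. *)
Definition homotopy_cut_set {X : TopSpace} (s t : R) (alpha beta : R -> X)
    (A : R -> Prop) : Prop :=
  (forall x, A x -> s <= x <= t) /\
  closed_R A /\
  nowhere_dense A /\
  A s /\ A t /\
  (forall x, A x -> alpha x = beta x) /\
  (forall a b, A a -> A b -> a < b -> (forall x, a < x < b -> ~ A x) ->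
     path_homotopic a b alpha beta).

Definition scattered_Pi1_products (X : TopSpace) : Prop :=
  forall alpha beta : R -> X, is_path 0 1 alpha -> is_path 0 1 beta ->
  (exists A, homotopy_cut_set 0 1 alpha beta A /\ scattered A) ->
  path_homotopic 0 1 alpha beta.

(* A need not be scattered, but it can be thinned to a scattered cut-set B.
   Near 0 keep either a sequence of points of A tending to 0 fast enough to be
   discrete in (0,1] (when 0 is a limit of A from the right), or else the least
   point of A in (0,1); symmetrically near 1.  With 0 and 1 added, B is closed
   and can only accumulate at 0 and 1, hence is scattered.  A gap (p,q) of B
   with 0 < p < q < 1 is handled by the hypothesis on inner points of A; a gap
   starting at 0 or ending at 1 misses A entirely by the choice of B, so it is a
   gap of A. *)

From Stdlib Require Import Reals Lra Lia Classical ClassicalEpsilon.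
Open Scope R_scope.

Ltac solve_Rabs := unfold Rabs in *; repeat match goal with
  | H : context [Rcase_abs ?t] |- _ => destruct (Rcase_abs t)
  | |- context [Rcase_abs ?t] => destruct (Rcase_abs t) end; try lra.

Definition isolated_in (B : R -> Prop) (x : R) : Prop :=
  exists e, 0 < e /\ forall y, B y -> Rabs (y - x) < e -> y = x.

Lemma isolated_in_of_locally_unique (B : R -> Prop) x e : 0 < e ->
  (forall y z, B y -> B z -> Rabs (y - x) < e -> Rabs (z - x) < e -> y = z) ->
  isolated_in B x.
Proof.
  intros he Huniq.
  destruct (classic (exists y, B y /\ Rabs (y - x) < e /\ y <> x))
    as [[y [By [hy ny]]] | hnone].
  - exists (Rabs (y - x)); split; [apply Rabs_pos_lt; lra|].
    intros z Bz hz; exfalso.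
    assert (z = y) by (apply Huniq; auto; lra); subst; lra.
  - exists e; split; auto.
    intros z Bz hz; apply NNPP; intro; apply hnone; eauto.
Qed.

Lemma isolated_in_of_subsingleton (B : R -> Prop) x :
  (forall y z, B y -> B z -> y = z) -> isolated_in B x.
Proof. intros H; apply (isolated_in_of_locally_unique _ x 1); auto; lra. Qed.

Lemma isolated_in_sub (B C : R -> Prop) x :
  (forall y, C y -> B y) -> isolated_in B x -> isolated_in C x.
Proof. intros hCB [e [he H]]; exists e; split; auto. Qed.

Lemma isolated_in_or (B C : R -> Prop) x :
  isolated_in B x -> isolated_in C x -> isolated_in (fun y => B y \/ C y) x.
Proof.
  intros [e1 [he1 H1]] [e2 [he2 H2]].
  exists (Rmin e1 e2); split; [now apply Rmin_glb_lt|].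
  pose proof (Rmin_l e1 e2); pose proof (Rmin_r e1 e2).
  intros y [By | Cy] hy; [apply H1 | apply H2]; auto; lra.
Qed.

Lemma isolated_in_reflect (B : R -> Prop) c x :
  isolated_in B (c - x) -> isolated_in (fun y => B (c - y)) x.
Proof.
  intros [e [he H]]; exists e; split; auto.
  intros y By hy.
  assert (c - y = c - x) by (apply H; auto; solve_Rabs); lra.
Qed.

Lemma closed_R_reflect (A : R -> Prop) c :
  closed_R A -> closed_R (fun x => A (c - x)).
Proof.
  intros hA x hx; apply hA; intros e he.
  destruct (hx e he) as [a [Aa ha]].
  exists (c - a); split; [replace (c - (c - a)) with a by ring; auto | solve_Rabs].
Qed.

Lemma closed_R_inter_ge (A : R -> Prop) c :
  closed_R A -> closed_R (fun x => A x /\ c <= x).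
Proof.
  intros hA x hx; split.
  - apply hA; intros e he; destruct (hx e he) as [a [[Aa _] ha]]; eauto.
  - apply Rnot_lt_le; intro hxc.
    destruct (hx (c - x)) as [a [[_ hca] ha]]; [lra | solve_Rabs].
Qed.

Lemma closed_R_least (S : R -> Prop) :
  closed_R S -> (exists x, S x) -> (exists m, forall x, S x -> m <= x) ->
  exists L, S L /\ forall x, S x -> L <= x.
Proof.
  intros hS [x Sx] [m hm].
  set (E := fun y => forall z, S z -> y <= z).
  destruct (completeness E) as [L [hL1 hL2]];
    [exists x; intros y hy; auto | exists m; exact hm |].
  assert (hlow : forall z, S z -> L <= z) by (intros z Sz; apply hL2; intros y hy; auto).
  exists L; split; auto.
  apply hS; intros e he.
  apply NNPP; intro hn.
  assert (E (L + e)).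
  { intros z Sz; apply Rnot_lt_le; intro; apply hn; exists z.
    specialize (hlow z Sz); split; auto; solve_Rabs. }
  specialize (hL1 _ H); lra.
Qed.

Definition thinning_at_0 (A F : R -> Prop) : Prop :=
  (forall x, F x -> A x /\ 0 < x < 1) /\
  (forall q, 0 < q <= 1 -> (forall x, 0 < x < q -> ~ F x) ->
     forall x, 0 < x < q -> ~ A x) /\
  (forall x, 0 < x -> isolated_in F x).

Lemma halving_sequence_in (A : R -> Prop) :
  (forall t, 0 < t -> exists a, A a /\ 0 < a < t) ->
  exists a : nat -> R,
    (forall k, A (a k) /\ 0 < a k) /\ a O < 1/2 /\ forall k, a (S k) < a k / 2.
Proof.
  intros hA.
  set (m := fun t => epsilon (inhabits 0) (fun a => A a /\ 0 < a < t)).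
  assert (hm : forall t, 0 < t -> A (m t) /\ 0 < m t < t)
    by (intros t ht; apply epsilon_spec, hA, ht).
  clearbody m.
  set (a := fix a k := match k with O => m (1/2) | S k => m (a k / 2) end).
  assert (ha : forall k, A (a k) /\ 0 < a k /\ a k < (match k with O => 1 | S j => a j end) / 2).
  { induction k as [|k IH]; simpl.
    - destruct (hm (1/2) ltac:(lra)); repeat split; auto; lra.
    - destruct (hm (a k / 2)); [lra|]; split; auto; lra. }
  exists a; split; [|split].
  - intro k; destruct (ha k) as [? [? _]]; auto.
  - destruct (ha O) as [_ [_ h]]; lra.
  - intro k; apply (ha (S k)).
Qed.

Lemma halving_sequence_thinning (A : R -> Prop) (a : nat -> R) :
  (forall k, A (a k) /\ 0 < a k) -> a O < 1/2 -> (forall k, a (S k) < a k / 2) ->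
  thinning_at_0 A (fun x => exists k, x = a k).
Proof.
  intros hpos h0 hstep.
  assert (hpow : forall k, a k < (1/2)^k).
  { induction k as [|k IH]; simpl; [lra | specialize (hstep k); lra]. }
  assert (hdec : forall i j, (i < j)%nat -> a j < a i / 2).
  { intros i j; induction j as [|j IH]; intros hij; [lia|].
    specialize (hstep j); destruct (hpos j).
    destruct (Nat.eq_dec i j) as [->|]; [lra|].
    assert (a j < a i / 2) by (apply IH; lia); lra. }
  split; [|split].
  - intros x [k ->]; destruct (hpos k); split; auto; split; auto.
    destruct k as [|k]; [lra|].
    specialize (hdec O (S k) ltac:(lia)); destruct (hpos O); lra.
  - intros q hq hF x hx _.
    destruct (pow_lt_1_zero (1/2) ltac:(solve_Rabs) q ltac:(lra)) as [N HN].
    specialize (HN N (le_n _)); pose proof (Rle_abs ((1/2)^N)).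
    pose proof (hpow N); destruct (hpos N).
    apply (hF (a N)); [lra | eauto].
  - intros x hx; apply (isolated_in_of_locally_unique _ x (x/4)); [lra|].
    intros y z [i ->] [j ->] hy hz.
    destruct (hpos i), (hpos j).
    destruct (Nat.lt_total i j) as [l|[->|l]]; auto.
    + specialize (hdec i j l); solve_Rabs.
    + specialize (hdec j i l); solve_Rabs.
Qed.

Lemma least_element_thinning (A : R -> Prop) t0 :
  closed_R A -> 0 < t0 -> (forall a, A a -> 0 < a < t0 -> False) ->
  thinning_at_0 A (fun x => A x /\ 0 < x < 1 /\ forall b, A b -> 0 < b < 1 -> x <= b).
Proof.
  intros hA ht0 hgap; split; [|split].
  - intros x [? [? _]]; auto.
  - intros q hq hF x hx Ax.
    destruct (closed_R_least (fun y => A y /\ t0 <= y)) as [L [[AL hL] hmin]].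
    + now apply closed_R_inter_ge.
    + exists x; split; auto.
      apply Rnot_lt_le; intro; apply (hgap x); auto; lra.
    + exists t0; intros y [_ hy]; auto.
    + assert (hLx : L <= x).
      { apply hmin; split; auto; apply Rnot_lt_le; intro; apply (hgap x); auto; lra. }
      apply (hF L); [lra|]; split; auto; split; [lra|].
      intros b Ab hb; apply hmin; split; auto.
      apply Rnot_lt_le; intro; apply (hgap b); auto; lra.
  - intros x _; apply isolated_in_of_subsingleton.
    intros y z [Ay [hy hyb]] [Az [hz hzb]].
    specialize (hyb z Az hz); specialize (hzb y Ay hy); lra.
Qed.

Lemma exists_thinning_at_0 (A : R -> Prop) :
  closed_R A -> exists F, thinning_at_0 A F.
Proof.
  intros hA.
  destruct (classic (forall t, 0 < t -> exists a, A a /\ 0 < a < t)) as [hacc | hgap].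
  - destruct (halving_sequence_in A hacc) as [a [hpos [h0 hstep]]].
    eexists; now apply halving_sequence_thinning.
  - apply not_all_ex_not in hgap as [t0 ht0].
    apply imply_to_and in ht0 as [ht0 hgap].
    eexists; apply (least_element_thinning A t0 hA ht0).
    intros a Aa ha; apply hgap; eauto.
Qed.

Lemma closure_R_unit (B : R -> Prop) x :
  (forall y, B y -> 0 <= y <= 1) -> closure_R B x -> 0 <= x <= 1.
Proof.
  intros hB hx; split; apply Rnot_lt_le; intro.
  - destruct (hx (- x)) as [a [Ba ha]]; [lra|]; specialize (hB a Ba); solve_Rabs.
  - destruct (hx (x - 1)) as [a [Ba ha]]; [lra|]; specialize (hB a Ba); solve_Rabs.
Qed.

Section IsolatedInside.

Variable B : R -> Prop.
Hypothesis B_unit : forall x, B x -> 0 <= x <= 1.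
Hypothesis B_isolated : forall x, 0 < x < 1 -> isolated_in B x.

Lemma closed_R_of_isolated_inside : B 0 -> B 1 -> closed_R B.
Proof.
  intros B0 B1 x hx.
  destruct (closure_R_unit B x B_unit hx) as [[hx0 | <-] [hx1 | ->]]; auto.
  destruct (B_isolated x (conj hx0 hx1)) as [e [he H]].
  destruct (hx e he) as [y [By hy]].
  now rewrite <- (H y By hy).
Qed.

Lemma scattered_of_isolated_inside : scattered B.
Proof.
  intros C hCB [b Cb].
  destruct (classic (exists c, C c /\ 0 < c < 1)) as [[c [Cc hc]] | hnone].
  - exists c; split; auto.
    exact (isolated_in_sub B C c hCB (B_isolated c hc)).
  - assert (h01 : forall z, C z -> z = 0 \/ z = 1).
    { intros z Cz; pose proof (B_unit z (hCB z Cz)).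
      destruct (Req_dec z 0); auto; destruct (Req_dec z 1); auto.
      exfalso; apply hnone; exists z; split; auto; lra. }
    exists b; split; auto; exists (1/2); split; [lra|].
    intros z Cz hz.
    destruct (h01 z Cz) as [-> | ->]; destruct (h01 b Cb) as [-> | ->]; solve_Rabs.
Qed.

End IsolatedInside.

Lemma nowhere_dense_sub (A B : R -> Prop) :
  (forall x, B x -> A x) -> nowhere_dense A -> nowhere_dense B.
Proof.
  intros hBA hA c d hcd.
  destruct (hA c d hcd) as [x [hx hn]]; exists x; split; auto.
  intro hcl; apply hn; intros e he.
  destruct (hcl e he) as [a [Ba ha]]; eauto.
Qed.

Section ScatteredRefinement.

Variables (X : TopSpace) (alpha beta : R -> X) (A : R -> Prop).
Hypothesis hA : homotopy_cut_set 0 1 alpha beta A.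
Hypothesis hint : forall a b, A a -> A b -> 0 < a < 1 -> 0 < b < 1 -> a < b ->
  path_homotopic a b alpha beta.
Variables F G : R -> Prop.
Hypothesis hF : thinning_at_0 A F.
Hypothesis hG : thinning_at_0 (fun x => A (1 - x)) G.

Let B x := x = 0 \/ x = 1 \/ F x \/ G (1 - x).

Lemma refinement_sub : forall x, B x -> A x.
Proof.
  destruct hA as (_ & _ & _ & A0 & A1 & _); destruct hF as [hF1 _]; destruct hG as [hG1 _].
  intros x [-> | [-> | [Fx | Gx]]]; auto; [apply hF1; auto|].
  destruct (hG1 _ Gx) as [Ax _]; now replace x with (1 - (1 - x)) by ring.
Qed.

Lemma refinement_unit : forall x, B x -> 0 <= x <= 1.
Proof. destruct hA as [hsub _]; intros x Bx; apply hsub, refinement_sub, Bx. Qed.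

Lemma refinement_isolated : forall x, 0 < x < 1 -> isolated_in B x.
Proof.
  destruct hF as (_ & _ & hF3); destruct hG as (_ & _ & hG3).
  intros x hx.
  assert (hsing : forall c, isolated_in (fun y => y = c) x)
    by (intro c; apply isolated_in_of_subsingleton; congruence).
  repeat apply isolated_in_or; auto; [apply hF3; lra|].
  apply isolated_in_reflect, hG3; lra.
Qed.

Lemma refinement_components : forall p q, B p -> B q -> p < q ->
  (forall x, p < x < q -> ~ B x) -> path_homotopic p q alpha beta.
Proof.
  destruct hA as (_ & _ & _ & _ & _ & _ & hcomp).
  destruct hF as (_ & hF2 & _); destruct hG as (_ & hG2 & _).
  intros p q Bp Bq hpq hfree.
  pose proof (refinement_unit p Bp); pose proof (refinement_unit q Bq).
  pose proof (refinement_sub p Bp); pose proof (refinement_sub q Bq).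
  destruct (Req_dec p 0) as [-> | hp].
  { apply hcomp; auto; intros x hx Ax.
    apply (hF2 q ltac:(lra)) with x; auto.
    intros z hz Fz; apply (hfree z hz); unfold B; auto. }
  destruct (Req_dec q 1) as [-> | hq].
  { apply hcomp; auto; intros x hx Ax.
    apply (hG2 (1 - p) ltac:(lra)) with (1 - x); [| lra |].
    - intros z hz Gz; apply (hfree (1 - z)); [lra|].
      unfold B; replace (1 - (1 - z)) with z by ring; auto.
    - now replace (1 - (1 - x)) with x by ring. }
  apply hint; auto; lra.
Qed.

Lemma refinement_cut_set : homotopy_cut_set 0 1 alpha beta B /\ scattered B.
Proof.
  destruct hA as (_ & _ & hnd & _ & _ & heq & _).
  split; [|exact (scattered_of_isolated_inside B refinement_unit refinement_isolated)].
  split; [exact refinement_unit|].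
  split; [apply closed_R_of_isolated_inside;
            [exact refinement_unit | exact refinement_isolated | left | right; left]; auto|].
  split; [exact (nowhere_dense_sub A B refinement_sub hnd)|].
  split; [now left|]; split; [now right; left|].
  split; [intros x Bx; apply heq, refinement_sub, Bx|].
  exact refinement_components.
Qed.

End ScatteredRefinement.

Theorem mainTheorem13 (X : TopSpace) (hX : scattered_Pi1_products X)
  (alpha beta : R -> X) (A : R -> Prop)
  (halpha : is_path 0 1 alpha) (hbeta : is_path 0 1 beta)
  (hA : homotopy_cut_set 0 1 alpha beta A)
  (hint : forall a b, A a -> A b -> 0 < a < 1 -> 0 < b < 1 -> a < b ->
            path_homotopic a b alpha beta) :
  path_homotopic 0 1 alpha beta.
Proof.
  pose proof hA as (_ & hclosed & _).
  destruct (exists_thinning_at_0 A hclosed) as [F hF].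
  destruct (exists_thinning_at_0 _ (closed_R_reflect A 1 hclosed)) as [G hG].
  apply hX; auto.
  eexists; exact (refinement_cut_set X alpha beta A hA hint F G hF hG).
Qed.
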